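(* For positive integers $n,a,b$ and a nonnegative integer $c$, $M_n(a,b,c)=M_n(b,a,c)$.
   Context: $$M_n(a,b,c):=\operatorname{CT}_x\prod_{i=1}^n(1-x_i)^{-b}x_i^{-a+1}\prod_{1\le i<j\le n}(x_j-x_i)^{-c},$$ where $\operatorname{CT}_x=\operatorname{CT}_{x_n}\cdots\operatorname{CT}_{x_1}$ is iterated constant-term extraction, $(1-x_i)^{-b}$ is expanded as a power series in $x_i$, and for $i<j$, $(x_j-x_i)^{-c}=x_j^{-c}(1-x_i/x_j)^{-c}$ is expanded as a power series in $x_i/x_j$. *)

From mathcomp Require Import all_boot all_algebra.
Set Implicit Arguments. Unset Strict Implicit. Unset Printing Implicit Defensive.
Import GRing.Theory Num.Theory.

(* Full formal expansion of
     prod_i (1-x_i)^{-b} x_i^{-a+1} prod_{i<j} (x_j-x_i)^{-c}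
   with (1-x_i)^{-b} = sum_m 'C(b+m-1,m) x_i^m and
   (x_j-x_i)^{-c} = x_j^{-c} sum_k 'C(c+k-1,k) (x_i/x_j)^k.
   A monomial of the expansion is indexed by m : variables -> nat and
   k : pairs (i,j), i<j -> nat (k p = 0 forced for p.1 >= p.2).
   Indices are 0-based: variable x_{i+1} <-> i : 'I_n. *)

Definition ct_coef (n b c B : nat) (m : {ffun 'I_n -> 'I_B})
    (k : {ffun 'I_n * 'I_n -> 'I_B}) : nat :=
  (\prod_(i < n) 'C(b + m i - 1, m i)) *
  (\prod_(p : 'I_n * 'I_n | (p.1 < p.2)%N) 'C(c + k p - 1, k p)).

Definition ct_expo (n a c B : nat) (m : {ffun 'I_n -> 'I_B})
    (k : {ffun 'I_n * 'I_n -> 'I_B}) (i : 'I_n) : int :=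
  ((m i)%:Z + 1 - a%:Z
   + \sum_(j < n | (i < j)%N) (k (i, j) : nat)%:Z
   - \sum_(j < n | (j < i)%N) (c%:Z + (k (j, i) : nat)%:Z))%R.

Definition ct_const (n a c B : nat) (m : {ffun 'I_n -> 'I_B})
    (k : {ffun 'I_n * 'I_n -> 'I_B}) : bool :=
  [forall p : 'I_n * 'I_n, (p.1 < p.2)%N || (k p == 0 :> nat)] &&
  [forall i : 'I_n, ct_expo a c m k i == 0%R].

Definition ct_box (n a b c B : nat) : nat :=
  \sum_(m : {ffun 'I_n -> 'I_B}) \sum_(k : {ffun 'I_n * 'I_n -> 'I_B})
     (if ct_const a c m k then ct_coef b c m k else 0).

(* The set of constant monomials
   is finite: from the exponent equations solved successively for
   x_1, x_2, ..., every index is <= (2^n + n) * (a + n*c), so the box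
   bound below contains the whole support (it is symmetric in a, b only
   for convenience; any larger bound gives the same value). *)
Definition M (n a b c : nat) : nat :=
  ct_box n a b c ((2 ^ n + n) * (a + b + n * c)).+1.

From mathcomp Require Import all_boot all_algebra.
From mathcomp Require Import mpoly.
From mathcomp Require Import zify ring.
Set Implicit Arguments. Unset Strict Implicit. Unset Printing Implicit Defensive.
Import GRing.Theory Num.Theory.
Local Open Scope ring_scope.

(* Solving the exponent equations for the exponents m_i of (1-x_i)^-b leaves a
   sum, over the exponents k_ij of the pair factors, of prod_(i<j) C(c+k_ij-1,k_ij)
   times prod_i [x^D_i] (1-x)^-b, where
   D_i = a-1 + (i-1)c + sum_(j<i) k_ji - sum_(j>i) k_ij.
   Now [x^D] (1-x)^-b = [x^D] (1+x)^(D+b-1) and, with e = a+b-2+(n-1)c,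
   D_i+b-1 = e + sum_(j<i) k_ji - sum_(j>i) (k_ij+c).  So every pair i<j receives
   an extra factor (1+x_j)^k (1+x_i)^(-k-c), and summed over k these factors
   rebuild (1 - x_i/x_j)^-c: the factor (1-x)^-b may be traded for (1+x)^e.
   The resulting constant term is invariant under x_i -> 1/x_(n+1-i) together
   with a <-> b, since [x^D] (1+x)^e = [x^(e-D)] (1+x)^e.  The power series
   identities are proved in R[y_1..y_n] modulo terms of high degree, with
   x_i = y_i ... y_n, so that every x_i/x_j (i < j) is a monomial of positive degree. *)

Section LowDegree.
Variables (R : comRingType) (n : nat).
Implicit Types (p q r : {mpoly R[n]}) (d : nat).

Definition order_ge d p := [forall m : 'X_{1..n < d}, p@_m == 0].

Definition eq_below d p q := order_ge d (p - q).

Lemma order_geP d p :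
  reflect (forall m : 'X_{1..n}, (mdeg m < d)%N -> p@_m = 0) (order_ge d p).
Proof.
apply: (iffP forallP) => [hp m hm | hp m]; first exact/eqP/(hp (BMultinom hm)).
exact/eqP/hp/bmdeg.
Qed.

Lemma order_ge_le d d' p : (d' <= d)%N -> order_ge d p -> order_ge d' p.
Proof.
by move=> le_d'd /order_geP hp; apply/order_geP => m hm; apply: hp; apply: leq_trans le_d'd.
Qed.

Lemma order_geD d p q : order_ge d p -> order_ge d q -> order_ge d (p + q).
Proof.
by move=> /order_geP hp /order_geP hq; apply/order_geP => m hm; rewrite mcoeffD hp // hq // addr0.
Qed.

Lemma order_geN d p : order_ge d p -> order_ge d (- p).
Proof. by move=> /order_geP hp; apply/order_geP => m hm; rewrite mcoeffN hp // oppr0. Qed.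

Lemma order_geM d1 d2 p q :
  order_ge d1 p -> order_ge d2 q -> order_ge (d1 + d2) (p * q).
Proof.
move=> /order_geP hp /order_geP hq; apply/order_geP => m hm.
rewrite mcoeffM big1 // => -[m1 m2] /= /eqP def_m; rewrite def_m mdegD in hm.
have [lt_m1|ge_m1] := ltnP (mdeg m1) d1; first by rewrite hp ?mul0r.
by rewrite hq ?mulr0 // -(ltn_add2l (mdeg m1)) (leq_trans hm) ?leq_add2r.
Qed.

Lemma order_geMl d p q : order_ge d q -> order_ge d (p * q).
Proof. by move=> hq; rewrite -[d]add0n; apply: order_geM => //; apply/order_geP. Qed.

Lemma order_geMr d p q : order_ge d p -> order_ge d (p * q).
Proof. by rewrite mulrC; apply: order_geMl. Qed.

Lemma order_geX (m0 : 'X_{1..n}) : order_ge (mdeg m0) 'X_[m0].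
Proof.
apply/order_geP => m hm; rewrite mcoeffX; case: eqP => // def_m.
by rewrite def_m ltnn in hm.
Qed.

Lemma order_geXn d p k : order_ge d p -> order_ge (d * k) (p ^+ k).
Proof.
move=> hp; elim: k => [|k ihk]; first by rewrite muln0; apply/order_geP.
by rewrite exprS mulnS; apply: order_geM.
Qed.

Lemma eq_below_coef d p q m : eq_below d p q -> (mdeg m < d)%N -> p@_m = q@_m.
Proof. by move=> /order_geP hpq hm; apply/eqP; rewrite -subr_eq0 -mcoeffB hpq. Qed.

Lemma eq_below_subr d p r : order_ge d r -> eq_below d (p - r) p.
Proof. by move=> hr; rewrite /eq_below addrAC subrr add0r; apply: order_geN. Qed.

Lemma eq_below_refl d p : eq_below d p p.
Proof. by rewrite /eq_below subrr; apply/order_geP => m _; rewrite mcoeff0. Qed.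

Lemma eq_below_sym d p q : eq_below d p q -> eq_below d q p.
Proof. by move=> hpq; rewrite /eq_below -opprB; apply: order_geN. Qed.

Lemma eq_below_trans d p q r : eq_below d p q -> eq_below d q r -> eq_below d p r.
Proof.
by move=> hpq hqr; rewrite /eq_below -[p](subrK q) -addrA; apply: order_geD.
Qed.

Lemma eq_belowM d p p' q q' :
  eq_below d p p' -> eq_below d q q' -> eq_below d (p * q) (p' * q').
Proof.
move=> hp hq; rewrite /eq_below; have -> : p * q - p' * q' = (p - p') * q + p' * (q - q') by ring.
by apply: order_geD; [apply: order_geMr | apply: order_geMl].
Qed.

Lemma eq_belowX d p q k : eq_below d p q -> eq_below d (p ^+ k) (q ^+ k).
Proof.
move=> hpq; elim: k => [|k ihk]; first exact: eq_below_refl.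
by rewrite !exprS; apply: eq_belowM.
Qed.

Lemma eq_below_prod d (I : Type) (s : seq I) (P : pred I) (F G : I -> {mpoly R[n]}) :
  (forall i, P i -> eq_below d (F i) (G i)) ->
  eq_below d (\prod_(i <- s | P i) F i) (\prod_(i <- s | P i) G i).
Proof.
move=> hFG; apply: (big_ind2 (eq_below d)) => //; [exact: eq_below_refl | exact: eq_belowM].
Qed.

Lemma eq_below_inv_uniq d p q q' :
  eq_below d (p * q) 1 -> eq_below d (p * q') 1 -> eq_below d q q'.
Proof.
move=> hq hq'; apply: (eq_below_trans (q := q * (p * q'))).
  by rewrite -{1}[q]mulr1; exact: (eq_belowM (eq_below_refl _ q) (eq_below_sym hq')).
rewrite mulrA [q * p]mulrC -[X in eq_below _ _ X]mul1r.
exact: (eq_belowM hq (eq_below_refl _ q')).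
Qed.

End LowDegree.

Arguments order_geX {R n} m0.
Arguments eq_below_refl {R n d} p.

Section Series.
Variable R : comRingType.
Implicit Type z : R.

Definition binom_series (c B : nat) z := \sum_(k < B) 'C(c + k - 1, k)%:R * z ^+ k.

Definition alt_geom (N : nat) z := \sum_(k < N) (- z) ^+ k.

Lemma binom_series0 B z : binom_series 0 B.+1 z = 1.
Proof.
rewrite /binom_series big_ord_recl big1 => [|k _]; first by rewrite bin0 mul1r addr0.
by rewrite add0n subn1 /= bin_small ?mul0r.
Qed.

Lemma mul1B_binom_series c B z :
  (1 - z) * binom_series c.+1 B.+1 z =
  binom_series c B.+1 z - 'C(c + B, B)%:R * z ^+ B.+1.
Proof.
rewrite /binom_series; elim: B => [|B ihB].
  by rewrite !big_ord1 !bin0 !mul1r expr0 expr1 mulr1.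
rewrite big_ord_recr /= mulrDr ihB [in RHS]big_ord_recr /=.
rewrite !addnS addSn !subn1 /= binS natrD !exprS.
ring.
Qed.

Lemma mul1D_alt_geom N z : (1 + z) * alt_geom N z = 1 - (- z) ^+ N.
Proof.
have -> : 1 + z = - (- z - 1) by rewrite opprB opprK addrC.
by rewrite mulNr -subrX1 opprB.
Qed.

End Series.

Section SeriesInverses.
Variables (R : comRingType) (n : nat).
Implicit Types (r v z : {mpoly R[n]}) (d : nat).

Lemma binom_seriesK c B d z : order_ge 1 z -> (d <= B)%N ->
  eq_below d ((1 - z) ^+ c * binom_series c B z) 1.
Proof.
move=> hz; case: B => [|B] le_dB.
  by rewrite leqn0 in le_dB; rewrite (eqP le_dB); apply/order_geP.
elim: c => [|c ihc]; first by rewrite expr0 mul1r binom_series0; exact: eq_below_refl.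
rewrite exprSr -mulrA mul1B_binom_series mulrBr.
apply: eq_below_trans (eq_below_subr _ _) ihc.
apply/order_geMl/order_geMl/(order_ge_le le_dB).
by rewrite -{1}[B.+1]mul1n; exact: order_geXn.
Qed.

Lemma alt_geomK d z : order_ge 1 z -> eq_below d ((1 + z) * alt_geom d z) 1.
Proof.
move=> hz; rewrite mul1D_alt_geom; apply: eq_below_subr.
by rewrite exprNn -{1}[d]mul1n; apply/order_geMl/order_geXn.
Qed.

(* (1 - r)^-c = sum_k C(c+k-1,k) (r (1+v))^k (1 + r v)^(-k-c): expand
   (1 - r)^-c = (1 + r v)^-c (1 - Z)^-c with Z = r (1 + v) / (1 + r v). *)
Lemma binom_series_twist c B d r v : order_ge 1 r -> (d <= B)%N ->
  eq_below d
    (\sum_(k < B) 'C(c + k - 1, k)%:R * r ^+ k *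
       ((1 + v) ^+ k * alt_geom d (r * v) ^+ (k + c)))
    (binom_series c B r).
Proof.
move=> hr le_dB; set G := alt_geom d (r * v); set Z := r * ((1 + v) * G).
have -> : \sum_(k < B) 'C(c + k - 1, k)%:R * r ^+ k * ((1 + v) ^+ k * G ^+ (k + c))
          = binom_series c B Z * G ^+ c.
  by rewrite mulr_suml; apply: eq_bigr => k _; rewrite !exprMn exprD !mulrA.
have hG : eq_below d ((1 + r * v) * G) 1 by apply/alt_geomK/order_geMr.
have hZ : eq_below d ((1 - Z) * (1 + r * v)) (1 - r).
  rewrite /eq_below.
  have -> : (1 - Z) * (1 + r * v) - (1 - r) = - (r * (1 + v)) * ((1 + r * v) * G - 1).
    by rewrite /Z; ring.
  exact: order_geMl.
apply: (eq_below_inv_uniq (p := (1 - r) ^+ c)); last exact: binom_seriesK.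
apply: (eq_below_trans (q := ((1 - Z) * (1 + r * v)) ^+ c * (binom_series c B Z * G ^+ c))).
  exact: (eq_belowM (eq_belowX _ (eq_below_sym hZ)) (eq_below_refl _)).
have -> : ((1 - Z) * (1 + r * v)) ^+ c * (binom_series c B Z * G ^+ c)
          = ((1 - Z) ^+ c * binom_series c B Z) * ((1 + r * v) * G) ^+ c.
  by rewrite !exprMn; ring.
rewrite -[X in eq_below _ _ X](expr1n _ c) -[X in eq_below _ _ X]mul1r.
apply: eq_belowM (eq_belowX _ hG).
by apply: binom_seriesK; rewrite // /Z; apply: order_geMr.
Qed.

End SeriesInverses.

Section UnivariateCoef.
Variable R : comRingType.
Implicit Type p : {poly R}.

Definition coefz p (D : int) : R := if 0 <= D then p`_`|D| else 0.

Lemma coef_Xadd1n z D : (('X + 1) ^+ z : {poly R})`_D = 'C(z, D)%:R.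
Proof.
elim: z D => [|z ihz] D; first by case: D => [|D]; rewrite expr0 coef1.
rewrite exprSr mulrDr mulr1 coefD coefMX ihz.
by case: D => [|D]; rewrite /= ?ihz ?bin0 ?add0r // binS natrD addrC.
Qed.

Lemma coef_Xadd1n_alt_geom x y d D : (y <= x)%N -> (D < d)%N ->
  (('X + 1) ^+ x * alt_geom d 'X ^+ y : {poly R})`_D = 'C(x - y, D)%:R.
Proof.
move=> le_yx lt_Dd; set s : {poly R} := - (-1) ^+ d.
rewrite -{1}(subnK le_yx) exprD -mulrA -exprMn.
have -> : ('X + 1) * alt_geom d 'X = 1 + 'X^d * s.
  by rewrite addrC mul1D_alt_geom exprNn mulrC -mulrN.
set u := 1 + _; have u1 : u - 1 = 'X^d * s by rewrite /u addrC addKr.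
have -> : u ^+ y = 1 + 'X^d * (s * \sum_(i < y) u ^+ i).
  by rewrite -[u ^+ y](subrK 1) subrX1 u1 mulrA addrC.
by rewrite mulrDr mulr1 coefD mulrCA coefXnM lt_Dd addr0 coef_Xadd1n.
Qed.

Lemma coefz_Xadd1n_sym e D :
  coefz (('X + 1) ^+ e) (e%:Z - D) = coefz (('X + 1) ^+ e) D.
Proof.
rewrite /coefz !coef_Xadd1n; case: D => d.
  rewrite le0z_nat; have [le_de|lt_ed] := leqP d e.
    by rewrite subzn // le0z_nat absz_nat bin_sub.
  by rewrite subr_ge0 lez_nat leqNgt lt_ed /= bin_small.
by rewrite NegzE opprK -PoszD le0z_nat absz_nat bin_small //; lia.
Qed.

End UnivariateCoef.

Lemma Posz_sum (I : Type) (r : seq I) (P : pred I) (F : I -> nat) :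
  (\sum_(i <- r | P i) F i)%N%:Z = \sum_(i <- r | P i) (F i)%:Z.
Proof. by rewrite -natz natr_sum; apply: eq_bigr => i _; rewrite natz. Qed.

Lemma prefix_sums_eq0 n (f : 'I_n -> int) :
  (forall l : 'I_n, \sum_(i < n | (i <= l)%N) f i = 0) -> forall i, f i = 0.
Proof.
move=> hf; suff f0 t (i : 'I_n) : (i : nat) = t -> f i = 0 by move=> i; exact: f0.
elim/ltn_ind: t i => t ih i def_i.
have := hf i; rewrite (bigD1 i) //= big1 ?addr0 // => j /andP [le_ji ne_ji].
by apply: (ih j) => //; rewrite -def_i ltn_neqAle val_eqE ne_ji.
Qed.

Section Substitution.
Variable n : nat.

(* With 0-based indices, [xmon i] is x_(i+1) = y_(i+1) ... y_n and
   [ratmon i j] is x_(i+1)/x_(j+1). *)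
Definition xmon (i : nat) : 'X_{1..n} := [multinom (i <= l)%N : nat | l < n].

Definition ratmon (i j : nat) : 'X_{1..n} := [multinom ((i <= l) && (l < j))%N : nat | l < n].

Lemma ratmonD i j : (i < j)%N -> (ratmon i j + xmon j)%MM = xmon i.
Proof.
move=> lt_ij; apply/mnmP => l; rewrite mnmDE !mnmE.
by case: (leqP i l); case: (leqP j l) => /=; lia.
Qed.

Lemma mnm_le_mdeg (m : 'X_{1..n}) (l : 'I_n) : (m l <= mdeg m)%N.
Proof. by rewrite mdegE (bigD1 l) //= leq_addr. Qed.

Lemma mdeg_xmon_gt0 (i : 'I_n) : (0 < mdeg (xmon i))%N.
Proof. by apply: leq_trans (mnm_le_mdeg _ i); rewrite mnmE leqnn. Qed.

Lemma mdeg_ratmon_gt0 (i j : 'I_n) : (i < j)%N -> (0 < mdeg (ratmon i j))%N.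
Proof. by move=> lt_ij; apply: leq_trans (mnm_le_mdeg _ i); rewrite mnmE leqnn lt_ij. Qed.

Lemma mdeg_xmon_le i : (mdeg (xmon i) <= n)%N.
Proof.
rewrite mdegE -[X in (_ <= X)%N]card_ord -sum1_card.
by apply: leq_sum => l _; rewrite mnmE leq_b1.
Qed.

Lemma mnm_sum_xmon (f : 'I_n -> nat) (l : 'I_n) :
  (\sum_(i < n) xmon i *+ f i)%MM l = (\sum_(i < n | (i <= l)%N) f i)%N.
Proof.
rewrite mnm_sumE [RHS]big_mkcond; apply: eq_bigr => i _.
by rewrite mulmnE mnmE; case: (i <= l)%N; rewrite ?mul1n ?mul0n.
Qed.

Variables (c B : nat).
Implicit Type k : {ffun 'I_n * 'I_n -> 'I_B}.

Definition inflow k (i : 'I_n) := (\sum_(j < n | (j < i)%N) k (j, i))%N.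

Definition outflow k (i : 'I_n) := (\sum_(j < n | (i < j)%N) k (i, j))%N.

Definition forced_exp (a : nat) k (i : 'I_n) : int :=
  a%:Z - 1 + (i * c + inflow k i)%N%:Z - (outflow k i)%:Z.

Definition ct_mon (a : nat) : 'X_{1..n} := (\sum_(i < n) xmon i *+ (a.-1 + i * c))%MM.

Definition pairmon k : 'X_{1..n} := (\sum_(q : 'I_n * 'I_n) ratmon q.1 q.2 *+ k q)%MM.

Lemma pairmonE k (l : 'I_n) :
  (pairmon k l + \sum_(i < n | (i <= l)%N) inflow k i
   = \sum_(i < n | (i <= l)%N) outflow k i)%N.
Proof.
rewrite /pairmon mnm_sumE /inflow /outflow !pair_big_dep /=.
rewrite [X in (_ + X)%N](reindex_inj (h := fun q : 'I_n * 'I_n => (q.2, q.1))) /=; last first.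
  by move=> [? ?] [? ?] [-> ->].
rewrite [X in (_ + X)%N]big_mkcond [RHS]big_mkcond -big_split /=.
apply: eq_bigr => -[x y] _; rewrite mulmnE mnmE /=.
by case: (leqP x l); case: (ltnP l y); case: (ltnP x y); case: (leqP y l) => /=; lia.
Qed.

Lemma forced_expE a k i : (0 < a)%N ->
  forced_exp a k i = (a.-1 + i * c + inflow k i)%N%:Z - (outflow k i)%:Z.
Proof. by move=> a_gt0; rewrite /forced_exp -{1}(prednK a_gt0) !PoszD; ring. Qed.

Lemma ct_mon_coord_diff a k (m : 'I_n -> nat) (l : 'I_n) : (0 < a)%N ->
  ((pairmon k + \sum_(i < n) xmon i *+ m i)%MM l)%:Z - (ct_mon a l)%:Z
  = \sum_(i < n | (i <= l)%N) ((m i)%:Z - forced_exp a k i).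
Proof.
move=> a_gt0; rewrite mnmDE /ct_mon !mnm_sum_xmon.
under [RHS]eq_bigr do rewrite forced_expE // opprB addrA -PoszD.
rewrite sumrB -!Posz_sum !big_split /= -pairmonE !PoszD; ring.
Qed.

Lemma eq_ct_mon a k (m : 'I_n -> nat) : (0 < a)%N ->
  ((pairmon k + \sum_(i < n) xmon i *+ m i)%MM == ct_mon a)
  = [forall i, (m i)%:Z == forced_exp a k i].
Proof.
move=> a_gt0; apply/eqP/forallP => [def_mon i | m_forced].
  apply/eqP/subr0_eq; move: i; apply: prefix_sums_eq0 => l.
  by rewrite -ct_mon_coord_diff // def_mon subrr.
apply/mnmP => l; apply/eqP; rewrite -eqz_nat -subr_eq0 ct_mon_coord_diff //.
by apply/eqP/big1 => i _; apply/eqP; rewrite subr_eq0 m_forced.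
Qed.

Lemma forced_exp_le_mdeg a k : (0 < a)%N -> (forall i, 0 <= forced_exp a k i) ->
  forall i, (`|forced_exp a k i| <= mdeg (ct_mon a))%N.
Proof.
move=> a_gt0 fexp_ge0 i.
have /eqP <- : (pairmon k + \sum_(j < n) xmon j *+ `|forced_exp a k j|)%MM == ct_mon a.
  by rewrite eq_ct_mon //; apply/forallP => j; rewrite abszE ger0_norm.
rewrite mdegD !mdeg_sum (bigD1 i) //= mdegMn addnCA.
by apply: leq_trans _ (leq_addr _ _); rewrite leq_pmull ?mdeg_xmon_gt0.
Qed.

End Substitution.

Section CoefficientExtraction.
Variable R : comRingType.

Lemma prod_indicator (I : finType) (b : I -> bool) :
  \prod_i (b i)%:R = [forall i, b i]%:R :> R.
Proof.
have [/forallP b_all | /forallPn [j /negbTE bj]] := boolP [forall i, b i].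
  by rewrite big1 // => i _; rewrite b_all.
by rewrite (bigD1 j) //= bj mul0r.
Qed.

Lemma coefz_pinned (p : {poly R}) L (D : int) : (size p <= L)%N ->
  coefz p D = \sum_(j < L) p`_j * ((j : nat)%:Z == D)%:R.
Proof.
move=> le_pL; rewrite /coefz; case: D => [d|d] /=; last first.
  by rewrite big1 // => j _; rewrite mulr0.
have [lt_dL | le_Ld] := ltnP d L.
  rewrite (bigD1 (Ordinal lt_dL)) //= eqxx mulr1 big1 ?addr0 // => j ne_jd.
  rewrite eqz_nat; case: eqP => [def_j|]; last by rewrite mulr0.
  by case/eqP: ne_jd; apply: val_inj.
rewrite nth_default ?(leq_trans le_pL) // big1 // => j _.
by rewrite eqz_nat ltn_eqF ?mulr0 // (leq_trans (ltn_ord j)).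
Qed.

Lemma sum_ffun_coef_pinned (I : finType) L (P : I -> {poly R}) (D : I -> int) :
  (forall i, size (P i) <= L)%N ->
  \sum_(m : {ffun I -> 'I_L}) (\prod_i (P i)`_(m i)) * [forall i, (m i : nat)%:Z == D i]%:R
  = \prod_i coefz (P i) (D i).
Proof.
move=> le_PL; rewrite (eq_bigr _ (fun i _ => coefz_pinned (D i) (le_PL i))).
rewrite bigA_distr_bigA /=; apply: eq_bigr => m _.
by rewrite big_split /= prod_indicator.
Qed.

Lemma horner_alg_wide n (u : {mpoly R[n]}) (p : {poly R}) L : (size p <= L)%N ->
  horner_alg u p = \sum_(j < L) (p`_j)%:MP * u ^+ j.
Proof.
move=> le_pL; rewrite /horner_alg /horner_morph.
rewrite (horner_coef_wide _ (leq_trans (size_poly _ _) le_pL)).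
by apply: eq_bigr => j _; rewrite coef_map /= alg_mpolyC.
Qed.

End CoefficientExtraction.

Section PairExpansion.
Variables (R : comRingType) (n c B : nat).
Implicit Type k : {ffun 'I_n * 'I_n -> 'I_B}.

Lemma coef_pairmon_horner a k (P : 'I_n -> {poly R}) : (0 < a)%N ->
  ('X_[pairmon k] * \prod_(i < n) horner_alg 'X_[xmon n i] (P i))@_(ct_mon n c a)
  = \prod_(i < n) coefz (P i) (forced_exp c a k i).
Proof.
move=> a_gt0; set L := (\sum_(i < n) size (P i))%N.
have le_PL i : (size (P i) <= L)%N by rewrite /L (bigD1 i) //= leq_addr.
under eq_bigr do rewrite (horner_alg_wide _ (le_PL _)).
rewrite bigA_distr_bigA mulr_sumr raddf_sum -(sum_ffun_coef_pinned _ le_PL) /=.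
apply: eq_bigr => m _; rewrite big_split /= -rmorph_prod.
rewrite (eq_bigr (fun i : 'I_n => 'X_[xmon n i *+ m i])) => [|i _]; last exact: mpolyXn.
rewrite -(big_morph (fun m => 'X_[m] : {mpoly R[n]}) (@mpolyXD n R) (@mpolyX0 n R)).
by rewrite mulrCA -mpolyXD mcoeffCM mcoeffX eq_ct_mon.
Qed.

End PairExpansion.

Lemma binom_series_XE (R : comRingType) b B :
  binom_series b B 'X = \poly_(j < B) 'C(b + j - 1, j)%:R :> {poly R}.
Proof. by rewrite poly_def; apply: eq_bigr => j _; rewrite scaler_nat mulr_natl. Qed.

Lemma sum_ord_lt_const n (i : 'I_n) c : (\sum_(j < n | (j < i)%N) c)%N = (i * c)%N.
Proof.
rewrite (eq_bigl (fun j : 'I_n => true && (j < i)%N)) //.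
rewrite -(big_ord_widen_cond n xpredT (fun=> c) (ltnW (ltn_ord i))).
by rewrite sum_nat_const card_ord.
Qed.

Lemma sum_ord_gt_const n (i : 'I_n) c : (\sum_(j < n | (i < j)%N) c)%N = ((n - i.+1) * c)%N.
Proof.
rewrite (reindex_inj rev_ord_inj) /= -(sum_ord_lt_const (rev_ord i)).
by apply: eq_bigl => j /=; apply/idP/idP; have := ltn_ord i; have := ltn_ord j; lia.
Qed.

Lemma mulnD_ord_rev n (i : 'I_n) c : (i * c + (n - i.+1) * c = n.-1 * c)%N.
Proof. by rewrite -mulnDl; congr (_ * _); have := ltn_ord i; lia. Qed.

Section ConstantTermSum.
Variables (R : comRingType) (n c B : nat).
Implicit Type k : {ffun 'I_n * 'I_n -> 'I_B}.

(* [ct_sum a p] is the constant term of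
   prod_i x_i^(1-a) p(x_i) prod_(i<j) (x_j - x_i)^-c once the exponents m_i of
   p have been solved for; the exponents of the pair factors range over 'I_B,
   and pairs q with q.1 >= q.2 are dummies forced to exponent 0. *)
Definition pair_weight (q : 'I_n * 'I_n) (j : nat) : R :=
  if (q.1 < q.2)%N then 'C(c + j - 1, j)%:R else (j == 0)%:R.

Definition ct_sum (a : nat) (p : {poly R}) : R :=
  \sum_(k : {ffun 'I_n * 'I_n -> 'I_B})
     (\prod_q pair_weight q (k q)) * \prod_(i < n) coefz p (forced_exp c a k i).

End ConstantTermSum.

Arguments pair_weight {R n} c q j.

Lemma ct_expoE n a c B (m : {ffun 'I_n -> 'I_B}) (k : {ffun 'I_n * 'I_n -> 'I_B}) i :
  ct_expo a c m k i = (m i : nat)%:Z - forced_exp c a k i.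
Proof.
rewrite /ct_expo /forced_exp /inflow /outflow big_split /= -!Posz_sum sum_ord_lt_const PoszD.
ring.
Qed.

Lemma ct_box_sum n a b c B : (ct_box n a b c B)%:Z = ct_sum n c B a (binom_series b B 'X).
Proof.
rewrite /ct_box Posz_sum; under eq_bigr do rewrite Posz_sum.
rewrite exchange_big /ct_sum; apply: eq_bigr => k _.
have [k_upper | k_lower] :=
  boolP [forall q : 'I_n * 'I_n, (q.1 < q.2)%N || (k q == 0 :> nat)]; last first.
  rewrite big1 => [|m _]; last by rewrite /ct_const (negbTE k_lower).
  move/forallPn: k_lower => [q]; rewrite negb_or => /andP [/negbTE lower_q /negbTE kq0].
  by rewrite (bigD1 q) //= /pair_weight lower_q kq0 !mul0r.
have weight : \prod_(q : 'I_n * 'I_n) pair_weight c q (k q)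
               = (\prod_(q : 'I_n * 'I_n | (q.1 < q.2)%N) 'C(c + k q - 1, k q))%N%:Z.
  rewrite (bigID (fun q : 'I_n * 'I_n => (q.1 < q.2)%N)) /=.
  rewrite [X in _ * X]big1 ?mulr1 => [|q /negbTE lower_q].
    by rewrite -natz natr_prod; apply: eq_bigr => q upper_q; rewrite /pair_weight upper_q.
  by move/forallP: k_upper => /(_ q); rewrite /pair_weight lower_q /= => /eqP ->.
rewrite weight binom_series_XE -(sum_ffun_coef_pinned _ (fun=> size_poly _ _)) mulr_sumr.
apply: eq_bigr => m _; rewrite /ct_const k_upper /ct_coef /=.
have -> : [forall i, ct_expo a c m k i == 0] = [forall i, (m i : nat)%:Z == forced_exp c a k i].
  by apply: eq_forallb => i; rewrite ct_expoE subr_eq0.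
under [X in _ = _ * (X * _)]eq_bigr do rewrite coef_poly ltn_ord.
case: [forall _, _]; last by rewrite mulr0n !mulr0.
by rewrite mulr1 PoszM mulrC -natr_prod natz.
Qed.

Section Trade.
Variables (R : comRingType) (n c B : nat).
Local Notation box := {ffun 'I_n * 'I_n -> 'I_B}.
Implicit Type k : box.

Local Notation xvar i := ('X_[xmon n i] : {mpoly R[n]}).
Local Notation ratio q := ('X_[ratmon n q.1 q.2] : {mpoly R[n]}).

Definition pair_term (q : 'I_n * 'I_n) (j : nat) : {mpoly R[n]} :=
  (pair_weight c q j)%:MP * ratio q ^+ j.

Lemma ct_sum_as_coef a (P : box -> 'I_n -> {poly R}) : (0 < a)%N ->
  \sum_(k : box) (\prod_q pair_weight c q (k q)) * \prod_(i < n) coefz (P k i) (forced_exp c a k i)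
  = (\sum_(k : box) (\prod_q pair_term q (k q)) * \prod_(i < n) horner_alg (xvar i) (P k i))
      @_(ct_mon n c a).
Proof.
move=> a_gt0; rewrite raddf_sum; apply: eq_bigr => k _ /=.
rewrite -coef_pairmon_horner // big_split /= -rmorph_prod -mulrA mcoeffCM.
congr (_ * (_ * _)@__); rewrite /pairmon.
rewrite (big_morph (fun m => 'X_[m] : {mpoly R[n]}) (@mpolyXD n R) (@mpolyX0 n R)).
by apply: eq_bigr => q _; rewrite mpolyXn.
Qed.

(* [x^D] (1-x)^-b = [x^D] (1+x)^(D+b-1), and for D = forced_exp c a k i the
   exponent D+b-1 splits as below; alt_geom d 'X stands for (1+x)^-1. *)
Definition trade_poly (d e : nat) k (i : 'I_n) : {poly R} :=
  ('X + 1) ^+ (e + inflow k i) * alt_geom d 'X ^+ (\sum_(j < n | (i < j)%N) (k (i, j) + c)).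

Lemma coefz_binom_series_trade a b e k : (0 < a)%N -> (0 < b)%N ->
  (mdeg (ct_mon n c a) < B)%N -> (e + 2 = a + b + n.-1 * c)%N ->
  \prod_(i < n) coefz (binom_series b B 'X) (forced_exp c a k i)
  = \prod_(i < n) coefz (trade_poly (mdeg (ct_mon n c a)).+1 e k i) (forced_exp c a k i).
Proof.
move=> a_gt0 b_gt0 lt_monB def_e.
have [/forallP fexp_ge0 | /forallPn [j /negbTE fexp_lt0]] :=
  boolP [forall i, 0 <= forced_exp c a k i].
  apply: eq_bigr => i _; rewrite /coefz fexp_ge0 binom_series_XE coef_poly.
  have le_Dmon := forced_exp_le_mdeg a_gt0 fexp_ge0 i.
  have def_D : (a.-1 + i * c + inflow k i = outflow k i + `|forced_exp c a k i|)%N.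
    apply/eqP; rewrite -eqz_nat; apply/eqP.
    by rewrite [RHS]PoszD abszE ger0_norm // forced_expE //; ring.
  have out_c : (\sum_(j < n | (i < j)%N) (k (i, j) + c) = outflow k i + (n - i.+1) * c)%N.
    by rewrite big_split /= sum_ord_gt_const.
  have c_split := mulnD_ord_rev i c.
  rewrite (leq_ltn_trans le_Dmon lt_monB) /trade_poly out_c.
  by rewrite coef_Xadd1n_alt_geom ?ltnS //; [congr 'C(_, _)%:R | ]; lia.
by rewrite (bigD1 j) //= [RHS](bigD1 j) //= /coefz fexp_lt0 !mul0r.
Qed.

Definition twisted_term d q j : {mpoly R[n]} :=
  pair_term q j *
  (if (q.1 < q.2)%N then (1 + xvar q.2) ^+ j * alt_geom d (xvar q.1) ^+ (j + c) else 1).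

Lemma horner_alg_Xadd1n e (i : 'I_n) : horner_alg (xvar i) (('X + 1) ^+ e) = (1 + xvar i) ^+ e.
Proof. by rewrite rmorphXn rmorphD /= horner_algX rmorph1 addrC. Qed.

Lemma horner_alg_trade_poly d e k (i : 'I_n) :
  horner_alg (xvar i) (trade_poly d e k i)
  = (1 + xvar i) ^+ (e + inflow k i) *
    alt_geom d (xvar i) ^+ (\sum_(j < n | (i < j)%N) (k (i, j) + c)).
Proof.
rewrite /trade_poly /alt_geom rmorphM !rmorphXn rmorphD rmorph_sum /= horner_algX rmorph1 addrC.
by congr (_ * (_ ^+ _)); apply: eq_bigr => j _; rewrite rmorphXn rmorphN /= horner_algX.
Qed.

Lemma trade_regroup d e k :
  (\prod_q pair_term q (k q)) * \prod_(i < n) horner_alg (xvar i) (trade_poly d e k i)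
  = (\prod_q twisted_term d q (k q)) * \prod_(i < n) (1 + xvar i) ^+ e.
Proof.
have twist : \prod_q twisted_term d q (k q) = (\prod_q pair_term q (k q)) *
    ((\prod_(q : 'I_n * 'I_n | (q.1 < q.2)%N) (1 + xvar q.2) ^+ k q) *
     \prod_(q : 'I_n * 'I_n | (q.1 < q.2)%N) alt_geom d (xvar q.1) ^+ (k q + c)).
  by rewrite /twisted_term big_split /= -big_mkcond [X in _ * X]big_split.
have in_prod : \prod_(i < n) (1 + xvar i) ^+ inflow k i
               = \prod_(q : 'I_n * 'I_n | (q.1 < q.2)%N) (1 + xvar q.2) ^+ k q.
  under eq_bigr do rewrite -prodrXr.
  rewrite pair_big_dep /= (reindex_inj (h := fun q : 'I_n * 'I_n => (q.2, q.1))) /=.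
    by apply: eq_bigr => -[].
  by move=> [? ?] [? ?] [-> ->].
have out_prod : \prod_(i < n) alt_geom d (xvar i) ^+ (\sum_(j < n | (i < j)%N) (k (i, j) + c))
                = \prod_(q : 'I_n * 'I_n | (q.1 < q.2)%N) alt_geom d (xvar q.1) ^+ (k q + c).
  by under eq_bigr do rewrite -prodrXr; rewrite pair_big_dep; apply: eq_bigr => -[].
under [X in _ * X = _]eq_bigr do rewrite horner_alg_trade_poly exprD.
rewrite twist -in_prod -out_prod !big_split /=; ring.
Qed.

Lemma twisted_term_sum d q : (d <= B)%N ->
  eq_below d (\sum_(j < B) twisted_term d q j) (\sum_(j < B) pair_term q j).
Proof.
move=> le_dB; rewrite /twisted_term.
have [lt_q | /negbTE ge_q] := boolP (q.1 < q.2)%N; last first.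
  by under eq_bigr do rewrite mulr1; exact: eq_below_refl.
have pair_termE j : pair_term q j = 'C(c + j - 1, j)%:R * ratio q ^+ j.
  by rewrite /pair_term /pair_weight lt_q mpolyC_nat.
have ratioD : ratio q * xvar q.2 = xvar q.1 by rewrite -mpolyXD ratmonD.
have ratio_ge1 : order_ge 1 (ratio q).
  exact: order_ge_le (mdeg_ratmon_gt0 lt_q) (order_geX _).
have := binom_series_twist c (xvar q.2) ratio_ge1 le_dB; rewrite ratioD.
by congr (eq_below _ _ _); apply: eq_bigr => j _; rewrite pair_termE.
Qed.

Lemma ct_sum_trade a b e : (0 < a)%N -> (0 < b)%N ->
  (mdeg (ct_mon n c a) < B)%N -> (e + 2 = a + b + n.-1 * c)%N ->
  ct_sum n c B a (binom_series b B 'X : {poly R}) = ct_sum n c B a (('X + 1) ^+ e : {poly R}).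
Proof.
move=> a_gt0 b_gt0 lt_monB def_e; set d := (mdeg (ct_mon n c a)).+1.
rewrite /ct_sum.
under eq_bigr do rewrite (coefz_binom_series_trade _ a_gt0 b_gt0 lt_monB def_e).
rewrite (ct_sum_as_coef (fun k i => trade_poly d e k i)) //.
rewrite (ct_sum_as_coef (fun _ _ => ('X + 1) ^+ e)) //.
under eq_bigr do rewrite trade_regroup.
under [in RHS]eq_bigr do rewrite (eq_bigr _ (fun i _ => horner_alg_Xadd1n _ _)).
rewrite -!mulr_suml -(bigA_distr_bigA (fun q (j : 'I_B) => twisted_term d q j)).
rewrite -(bigA_distr_bigA (fun q (j : 'I_B) => pair_term q j)).
apply: eq_below_coef (ltnSn _); apply: eq_belowM (eq_below_refl _).
by apply: eq_below_prod => q _; apply: twisted_term_sum.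
Qed.

End Trade.

Section Reversal.
Variables (R : comRingType) (n c B : nat).
Local Notation box := {ffun 'I_n * 'I_n -> 'I_B}.
Implicit Type k : box.

Definition rev_pair (q : 'I_n * 'I_n) := (rev_ord q.2, rev_ord q.1).

Lemma rev_pairK : involutive rev_pair.
Proof. by move=> [i j]; rewrite /rev_pair /= !rev_ordK. Qed.

Lemma rev_ord_lt (i j : 'I_n) : (rev_ord j < rev_ord i)%N = (i < j)%N.
Proof. by rewrite /= ltn_sub2lE // ltnS; apply: ltn_ord. Qed.

Definition rev_box k : box := [ffun q => k (rev_pair q)].

Lemma inflow_rev k i : inflow (rev_box k) (rev_ord i) = outflow k i.
Proof.
rewrite /inflow /outflow (reindex_inj rev_ord_inj) /=.
by apply: eq_big => [j|j _]; rewrite ?rev_ord_lt // ffunE /rev_pair /= !rev_ordK.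
Qed.

Lemma outflow_rev k i : outflow (rev_box k) (rev_ord i) = inflow k i.
Proof.
rewrite /inflow /outflow (reindex_inj rev_ord_inj) /=.
by apply: eq_big => [j|j _]; rewrite ?rev_ord_lt // ffunE /rev_pair /= !rev_ordK.
Qed.

Lemma forced_exp_rev a b e k i :
  (0 < a)%N -> (0 < b)%N -> (e + 2 = a + b + n.-1 * c)%N ->
  forced_exp c a (rev_box k) (rev_ord i) = e%:Z - forced_exp c b k i.
Proof.
move=> a_gt0 b_gt0 def_e; rewrite !forced_expE // inflow_rev outflow_rev /=.
by have := mulnD_ord_rev i c; lia.
Qed.

Lemma pair_weight_rev q j : pair_weight c (rev_pair q) j = pair_weight c q j :> R.
Proof. by rewrite /pair_weight rev_ord_lt. Qed.

Lemma ct_sum_rev a b e : (0 < a)%N -> (0 < b)%N -> (e + 2 = a + b + n.-1 * c)%N ->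
  ct_sum n c B a (('X + 1) ^+ e : {poly R}) = ct_sum n c B b (('X + 1) ^+ e : {poly R}).
Proof.
have rev_boxK : involutive rev_box.
  by move=> k; apply/ffunP => q; rewrite !ffunE rev_pairK.
move=> a_gt0 b_gt0 def_e; rewrite /ct_sum (reindex_inj (can_inj rev_boxK)).
apply: eq_bigr => k _; congr (_ * _).
  rewrite (reindex_inj (can_inj rev_pairK)); apply: eq_bigr => q _.
  by rewrite ffunE rev_pairK pair_weight_rev.
rewrite (reindex_inj rev_ord_inj); apply: eq_bigr => i _.
by rewrite (forced_exp_rev _ _ a_gt0 b_gt0 def_e) coefz_Xadd1n_sym.
Qed.

End Reversal.

Lemma leq_sq_exp2 n : (n * n <= 2 ^ n + n)%N.
Proof.
have double_le m : (m.*2 <= 2 ^ m)%N.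
  by elim: m => [|m ihm] //; rewrite expnS doubleS; have := expn_gt0 2 m; lia.
by elim: n => [|m ihm] //; rewrite expnS; have := double_le m; lia.
Qed.

Lemma mdeg_ct_mon_le n c a : (mdeg (ct_mon n c a) <= n * n * (a + n * c))%N.
Proof.
rewrite mdeg_sum (@leq_trans (\sum_(i < n) n * (a + n * c)))%N //.
  apply: leq_sum => i _; rewrite mdegMn leq_mul ?mdeg_xmon_le //.
  by have := leq_mul (ltnW (ltn_ord i)) (leqnn c); lia.
by rewrite sum_nat_const card_ord mulnA.
Qed.

Theorem corollary4p1 (n a b c : nat) :
  (0 < n)%N -> (0 < a)%N -> (0 < b)%N -> M n a b c = M n b a c.
Proof.
move=> _ a_gt0 b_gt0; apply/eqP; rewrite -eqz_nat; apply/eqP.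
rewrite /M (addnC b a) !ct_box_sum.
set B := _.+1; set e := (a + b - 2 + n.-1 * c)%N.
have def_e : (e + 2 = a + b + n.-1 * c)%N by rewrite /e; lia.
have def_e' : (e + 2 = b + a + n.-1 * c)%N by rewrite (addnC b a).
have ct_mon_lt x y : (mdeg (ct_mon n c x) < ((2 ^ n + n) * (x + y + n * c)).+1)%N.
  by rewrite ltnS (leq_trans (mdeg_ct_mon_le n c x)) // leq_mul ?leq_sq_exp2 //; lia.
have ct_mon_lt_b : (mdeg (ct_mon n c b) < B)%N by rewrite /B (addnC a b) ct_mon_lt.
rewrite (ct_sum_trade _ a_gt0 b_gt0 (ct_mon_lt a b) def_e) (ct_sum_rev _ _ a_gt0 b_gt0 def_e).
by rewrite (ct_sum_trade _ b_gt0 a_gt0 ct_mon_lt_b def_e').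
Qed.
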